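(* Let $C$ and $D$ be centrally symmetric convex bodies in $\mathbb{R}^d$, let $\alpha>0$, and let $C_+:=C+\alpha D$. Then for every set $U\subseteq D^\circ$, $$\mathcal{N}_{(C_+)^\circ}(U,\alpha)\lesssim_d\mathcal{N}_{C^\circ}(U,\alpha).$$
   Context: Polar $X^\circ=\{y:\langle w,y\rangle\le1\ \forall w\in X\}$. For a convex body $E$ with $O\in\operatorname{int}E$, $U\subseteq\mathbb{R}^d$ and $\alpha>0$, $\mathcal{N}_E(U,\alpha)$ is the minimum number $m$ of translates $x_1+\alpha E,\dots,x_m+\alpha E$ ($x_i\in\mathbb{R}^d$) whose union contains $U$. $X\lesssim_d Y$ means $X\le c^dY$ for a constant $c\ge1$ independent of $d$, $C$, $D$, $\alpha$, $U$. *)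

From HB Require Import structures.
From mathcomp Require Import all_boot all_order all_algebra.
From mathcomp Require Import all_classical all_reals all_analysis.
Set Implicit Arguments. Unset Strict Implicit. Unset Printing Implicit Defensive.
Import Order.TTheory GRing.Theory Num.Theory.
Import numFieldNormedType.Exports.
Local Open Scope classical_set_scope.
Local Open Scope ring_scope.

Definition dotv (R : realType) (d : nat) (u v : 'rV[R]_d) : R :=
  \sum_(i < d) u ord0 i * v ord0 i.

Definition convex_body (R : realType) (d : nat) (E : set 'rV[R]_d) : Prop :=
  [/\ compact E, convex_set (E : set (convex_lmodType 'rV[R]_d)) & (E°) !=set0].

Definition centrally_symmetric (R : realType) (d : nat) (E : set 'rV[R]_d) : Prop :=
  forall x, E x -> E (- x).

Definition polar (R : realType) (d : nat) (X : set 'rV[R]_d) : set 'rV[R]_d :=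
  [set y | forall w, X w -> dotv w y <= 1].

Definition mink_add (R : realType) (d : nat) (C D : set 'rV[R]_d) (a : R)
  : set 'rV[R]_d := [set x + a *: y | x in C & y in D].

Definition covered_by (R : realType) (d : nat) (E U : set 'rV[R]_d) (a : R)
  (m : nat) : Prop :=
  exists x : 'I_m -> 'rV[R]_d,
    U `<=` \bigcup_(i in [set: 'I_m]) [set x i + a *: e | e in E].

(* covering number N_E(U,a): minimum number of translates (+oo if none) *)
Definition covnum (R : realType) (d : nat) (E U : set 'rV[R]_d) (a : R)
  : \bar R := ereal_inf [set (m%:R)%:E | m in covered_by E U a].

From Pilot Require Import Defs.
From HB Require Import structures.
From mathcomp Require Import all_boot all_order all_algebra.
From mathcomp Require Import all_classical all_reals all_analysis.
From mathcomp Require Import ring lra zify.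
Set Implicit Arguments. Unset Strict Implicit. Unset Printing Implicit Defensive.
Import Order.TTheory GRing.Theory Num.Theory.
Import numFieldNormedType.Exports.
Local Open Scope classical_set_scope.
Local Open Scope ring_scope.

(* Write K := alpha C° ∩ D° ([polar_meet]). Two points of U ⊆ D° lying in one
   translate x + alpha C° differ by a point of 2K, and (1/2)K ⊆ alpha (C + alpha D)°
   because <c + alpha e, v> = <c, v> + alpha <e, v>. Hence each translate of alpha C°
   that meets U is covered by M translates of alpha (C + alpha D)°, where 2K is
   covered by M translates of (1/2)K. The centres of a maximal (1/2)K-separated
   subset of 2K give such a cover, and a volume argument bounds their number by
   18^d; volumes of dilates of K are replaced by counts of points of a fine lattice
   eps Z^d. *)

Section Dilation.
Variables (R : realType) (d : nat).
Implicit Types (K : set 'rV[R]_d) (x y : 'rV[R]_d) (a b r : R).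

Definition cube r : set 'rV[R]_d := fun x => forall i, `|x ord0 i| <= r.

Definition dilate K a : set 'rV[R]_d := fun x => K (a^-1 *: x).

Definition separated K n (f : 'I_n -> 'rV[R]_d) :=
  (forall i, dilate K 2 (f i)) /\ (forall i j, i != j -> ~ dilate K (1/2) (f i - f j)).

Lemma cube_le r s : r <= s -> cube r `<=` cube s.
Proof. by move=> rs x xr i; apply: le_trans (xr i) rs. Qed.

Lemma dilateN K a x : centrally_symmetric K -> dilate K a x -> dilate K a (- x).
Proof. by move=> Ksym; rewrite /dilate scalerN; apply: Ksym. Qed.

Lemma dilateZ K a c x : 0 < c -> dilate K a x -> dilate K (c * a) (c *: x).
Proof. by move=> c0; rewrite /dilate scalerA invfM mulrAC mulVf ?gt_eqF // mul1r. Qed.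

Lemma dilate0 K a : K 0 -> dilate K a 0.
Proof. by rewrite /dilate scaler0. Qed.

Lemma cube_sub_dilate K a r : 0 < a -> cube r `<=` K -> cube (a * r) `<=` dilate K a.
Proof.
move=> a0 rK x xr; apply: rK => i.
by rewrite mxE normrM gtr0_norm ?invr_gt0 // mulrC ler_pdivrMr // mulrC.
Qed.

Lemma dilate_sub_cube K a b : 0 < a -> K `<=` cube b -> dilate K a `<=` cube (a * b).
Proof.
move=> a0 Kb x /Kb xb i; have := xb i.
by rewrite mxE normrM gtr0_norm ?invr_gt0 // mulrC ler_pdivrMr // mulrC.
Qed.

Lemma separated_extend K n (f : 'I_n -> 'rV[R]_d) y : centrally_symmetric K ->
  separated K f -> dilate K 2 y -> (forall j, ~ dilate K (1/2) (y - f j)) ->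
  exists g : 'I_n.+1 -> 'rV[R]_d, separated K g.
Proof.
move=> Ksym [f_in f_sep] y_in y_far.
pose g i := if unlift ord_max i is Some j then f j else y.
have g_lift j : g (lift ord_max j) = f j by rewrite /g liftK.
have g_max : g ord_max = y by rewrite /g unlift_none.
exists g; split=> [i|i j].
  by case: (unliftP ord_max i) => [j|] ->; rewrite ?g_lift ?g_max.
case: (unliftP ord_max i) => [i'|] ->; case: (unliftP ord_max j) => [j'|] ->.
- by rewrite !g_lift (inj_eq (@lift_inj _ ord_max)); apply: f_sep.
- by rewrite g_lift g_max => _ /(dilateN Ksym); rewrite opprB; apply: y_far.
- by rewrite g_lift g_max => _; apply: y_far.
- by rewrite eqxx.
Qed.

Section ConvexDilation.
Variable K : set 'rV[R]_d.
Hypothesis Kconv : forall x y (t : R), K x -> K y -> 0 <= t <= 1 ->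
  K (t *: x + (1 - t) *: y).
Hypothesis Ksym : centrally_symmetric K.

Lemma dilateD a b x y : 0 < a -> 0 < b ->
  dilate K a x -> dilate K b y -> dilate K (a + b) (x + y).
Proof.
rewrite /dilate => a0 b0 Kx Ky.
have -> : (a + b)^-1 *: (x + y) =
    (a / (a + b)) *: (a^-1 *: x) + (1 - a / (a + b)) *: (b^-1 *: y).
  by rewrite scalerDr !scalerA; congr (_ *: _ + _ *: _); field; lra.
apply: Kconv => //; apply/andP; split; first by apply: divr_ge0; lra.
by rewrite ler_pdivrMr; lra.
Qed.

Lemma dilateB a b x y : 0 < a -> 0 < b ->
  dilate K a x -> dilate K b y -> dilate K (a + b) (x - y).
Proof. by move=> a0 b0 Kx /(dilateN Ksym); apply: dilateD. Qed.

End ConvexDilation.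
End Dilation.

Lemma eq_floor_divn_lt (R : realType) (n u v : nat) (c : R) : (0 < n)%N ->
  Num.floor ((u%:R - c) / n%:R) = Num.floor ((v%:R - c) / n%:R) -> (u < v + n)%N.
Proof.
move=> n0 eq_fl; rewrite -(ltr_nat R) natrD.
have /andP[_ u_lt] := floor_itv ((u%:R - c) / n%:R).
have /andP[v_ge _] := floor_itv ((v%:R - c) / n%:R).
move: u_lt; rewrite eq_fl intrD => u_lt.
have : (u%:R - c) / n%:R < (v%:R - c) / n%:R + 1.
  by apply: lt_le_trans u_lt _; rewrite lerD2r.
by rewrite -ltrBlDl -mulrBl ltr_pdivrMr ?ltr0n // mul1r; lra.
Qed.

Lemma eq_floor_divn (R : realType) (n u v : nat) (c : R) : (0 < n)%N ->
  Num.floor ((u%:R - c) / n%:R) = Num.floor ((v%:R - c) / n%:R) ->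
  u = v %[mod n] -> u = v.
Proof.
move=> n0 eq_fl eq_mod.
have uv := eq_floor_divn_lt n0 eq_fl; have vu := eq_floor_divn_lt n0 (esym eq_fl).
wlog le_vu : u v eq_mod {eq_fl} uv vu / (v <= u)%N.
  by move=> wlog_uv; case/orP: (leq_total v u) => ?; last apply/esym; apply: wlog_uv.
move/eqP: eq_mod; rewrite eqn_mod_dvd // => /dvdn_leq; lia.
Qed.

Section Grid.
Variables (R : realType) (d : nat) (eps : R) (B : nat).
Hypothesis eps_gt0 : 0 < eps.

Definition grid := {ffun 'I_d -> 'I_(B.*2).+1}.
Implicit Types (x : 'rV[R]_d) (k : grid).

Definition gridpt (k : grid) : 'rV[R]_d := \row_i (eps * ((k i)%:R - B%:R)).

(* Rounds each coordinate down to eps Z; this is a grid point only on [cube (B * eps)]. *)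
Definition grid_round (x : 'rV[R]_d) : grid :=
  [ffun i => inord `|(Num.floor (x ord0 i / eps) + B%:Z)%R|%N].

Lemma gridpt_round x i : `|x ord0 i| <= B%:R * eps ->
  gridpt (grid_round x) ord0 i = eps * (Num.floor (x ord0 i / eps))%:~R.
Proof.
move=> /[!ler_norml] /andP[xl xu]; rewrite /gridpt /grid_round mxE ffunE.
set z := Num.floor _.
have zl : - (B%:Z) <= z.
  by rewrite floor_ge_int mulrNz ler_pdivlMr // mulNr.
have zu : z <= B%:Z.
  by rewrite -(ler_int R); apply: le_trans (floor_le _) _; rewrite ler_pdivrMr.
rewrite inordK; last by lia.
have -> : (`|(z + B%:Z)%R|%N)%:R = (z + B%:Z)%:~R :> R.
  by rewrite pmulrn gez0_abs //; lia.
by rewrite intrD addrK.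
Qed.

Lemma grid_round_err x i : `|x ord0 i| <= B%:R * eps ->
  0 <= x ord0 i - gridpt (grid_round x) ord0 i < eps.
Proof.
move=> xB; rewrite gridpt_round //.
have /andP[lo hi] := floor_itv (x ord0 i / eps).
move: lo hi; rewrite intrD; set w := (Num.floor _)%:~R => lo hi.
have e1 : eps * w <= x ord0 i by rewrite mulrC -ler_pdivlMr.
have e2 : x ord0 i < eps * (w + 1) by rewrite mulrC -ltr_pdivrMr.
apply/andP; split; lra.
Qed.

Lemma gridpt_roundK x : (forall i, `|x ord0 i| <= B%:R * eps) ->
  (forall i, exists z : int, x ord0 i = eps * z%:~R) -> gridpt (grid_round x) = x.
Proof.
move=> xB xZ; apply/rowP => i; rewrite gridpt_round //.
have [z ->] := xZ i.
by rewrite mulrAC divff ?gt_eqF // mul1r intrKfloor.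
Qed.

Lemma gridpt_int k i : exists z : int, gridpt k ord0 i = eps * z%:~R.
Proof. by exists ((k i)%:Z - B%:Z); rewrite mxE intrB. Qed.

Lemma gridpt_roundD k k' :
  (forall i, `|(gridpt k + gridpt k') ord0 i| <= B%:R * eps) ->
  gridpt (grid_round (gridpt k + gridpt k')) = gridpt k + gridpt k'.
Proof.
move=> kB; apply: gridpt_roundK => // i; rewrite mxE.
have [z ->] := gridpt_int k i; have [z' ->] := gridpt_int k' i.
by exists (z + z'); rewrite intrD mulrDr.
Qed.

Lemma gridpt_inj : injective gridpt.
Proof.
move=> k k' /rowP kk'; apply/ffunP => i; apply/val_inj/eqP.
have := kk' i; rewrite !mxE => /(mulfI (lt0r_neq0 eps_gt0))/addIr/eqP.
by rewrite eqr_nat.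
Qed.

End Grid.

Section Packing.
Variables (R : realType) (d : nat) (K : set 'rV[R]_d) (r b eps : R) (B : nat).
Implicit Types (a : R) (x : 'rV[R]_d) (k : grid d B).
Hypothesis Kconv : forall x y (t : R), K x -> K y -> 0 <= t <= 1 ->
  K (t *: x + (1 - t) *: y).
Hypothesis Ksym : centrally_symmetric K.
Hypothesis cube_sub_K : cube r `<=` K.
Hypothesis K_sub_cube : K `<=` cube b.
Hypothesis eps_gt0 : 0 < eps.
Hypothesis eps_small : 16 * eps <= r.
Hypothesis B_large : 3 * b <= B%:R * eps.

Local Notation gridpt := (@gridpt R d eps B).
Local Notation grid_round := (@grid_round R d eps B).

Definition grid_in a : {set grid d B} := [set k | `[< dilate K a (gridpt k) >]].

Lemma grid_inP a k : reflect (dilate K a (gridpt k)) (k \in grid_in a).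
Proof. by rewrite inE; apply: asboolP. Qed.

Let K0 : K 0.
Proof.
by apply: cube_sub_K => i; rewrite mxE normr0 (le_trans _ eps_small) ?mulr_ge0 ?ltW.
Qed.

Lemma dilate_sub_gridcube a : 0 < a <= 3 -> dilate K a `<=` cube (B%:R * eps).
Proof.
move=> /andP[a0 a3] x /(dilate_sub_cube a0 K_sub_cube) xb i.
have b0 : 0 <= b := le_trans (normr_ge0 _) (K_sub_cube K0 i).
apply: (le_trans (xb i)); apply: le_trans B_large; exact: ler_wpM2r.
Qed.

Lemma round_err_dilate a x : 0 < a <= 3 -> dilate K a x ->
  dilate K (1/16) (x - gridpt (grid_round x)).
Proof.
move=> a03 /(dilate_sub_gridcube a03) xB.
apply: (cube_sub_dilate _ cube_sub_K); first lra.
move=> i; rewrite mxE [X in `|_ + X|]mxE.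
have /andP[lo hi] := grid_round_err eps_gt0 (xB i).
by rewrite ger0_norm //; have := eps_small; lra.
Qed.

Lemma card_separated_mul n (f : 'I_n -> 'rV[R]_d) : separated K f ->
  (n * #|grid_in (3/16)| <= #|grid_in (9/4)|)%N.
Proof.
move=> [f_in f_sep].
pose s i := gridpt (grid_round (f i)).
have s_err i : dilate K (1/16) (f i - s i).
  by apply: round_err_dilate (f_in i); lra.
have s_in (i : 'I_n) t : t \in grid_in (3/16) -> dilate K (9/4) (s i + gridpt t).
  move=> /grid_inP t_in; have -> : s i = f i - (f i - s i) by rewrite subKr.
  have -> : (9/4 : R) = 2 + 1/16 + 3/16 by lra.
  by apply: (dilateD Kconv _ _ (dilateB Kconv Ksym _ _ (f_in i) (s_err i)) t_in); lra.
have s_grid (i : 'I_n) t : t \in grid_in (3/16) ->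
    gridpt (grid_round (s i + gridpt t)) = s i + gridpt t.
  move=> t_in; apply: (gridpt_roundD eps_gt0).
  by apply: (dilate_sub_gridcube _ (s_in i t t_in)); lra.
pose F p := grid_round (s p.1 + gridpt p.2).
(* A common point of s i + (3/16)K and s j + (3/16)K puts f i - f j in (1/2)K. *)
have F_inj : {in finset.setX [set: 'I_n] (grid_in (3/16)) &, injective F}.
  move=> [i t] [j t'] /setXP[_ t_in] /setXP[_ t'_in] /(congr1 gridpt).
  rewrite /F /= !s_grid // => st.
  have [eq_ij|ij] := eqVneq i j.
    by subst j; rewrite (gridpt_inj eps_gt0 (addrI _ st)).
  case: (f_sep i j ij).
  have -> : f i - f j = (f i - s i) - (f j - s j) + (gridpt t' - gridpt t).
    by apply/rowP => k; move/rowP/(_ k): st; rewrite !mxE; lra.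
  have -> : (1/2 : R) = 1/16 + 1/16 + (3/16 + 3/16) by lra.
  have /grid_inP t_in' := t_in; have /grid_inP t'_in' := t'_in.
  apply: (dilateD Kconv _ _ (dilateB Kconv Ksym _ _ (s_err i) (s_err j))
    (dilateB Kconv Ksym _ _ t'_in' t_in')); lra.
have F_sub : F @: finset.setX [set: 'I_n] (grid_in (3/16)) \subset grid_in (9/4).
  apply/fintype.subsetP => _ /imsetP[[i t] /setXP[_ t_in] ->].
  by apply/grid_inP; rewrite /F /= s_grid //; apply: s_in.
by have := subset_leq_card F_sub; rewrite card_in_imset // cardsX cardsT card_ord.
Qed.

Lemma card_grid_in_le : (#|grid_in (9/4)| <= 18 ^ d * #|grid_in (3/16)|)%N.
Proof.
(* k is determined by k mod 18 and the rounding of k / 18 ∈ (1/8)K, which lies in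
   (1/8 + 1/16)K. *)
pose G k : grid d B * {ffun 'I_d -> 'I_18} :=
  (grid_round (18^-1 *: gridpt k), [ffun i => inord (k i %% 18)]).
have shrink k : k \in grid_in (9/4) -> dilate K (1/8) (18^-1 *: gridpt k).
  move=> /grid_inP /(dilateZ (_ : 0 < 18^-1)).
  by rewrite (_ : 18^-1 * (9/4) = 1/8); [apply; rewrite invr_gt0; lra | field].
have shrink_cube k : k \in grid_in (9/4) -> cube (B%:R * eps) (18^-1 *: gridpt k).
  by move=> /shrink; apply: dilate_sub_gridcube; lra.
have G_sub : G @: grid_in (9/4) \subset
    finset.setX (grid_in (3/16)) [set: {ffun 'I_d -> 'I_18}].
  apply/fintype.subsetP => _ /imsetP[k k_in ->].
  apply/setXP; split; last by rewrite inE.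
  have y_in := shrink k k_in; set y := 18^-1 *: gridpt k in y_in *.
  have y_err : dilate K (1/16) (y - gridpt (grid_round y)).
    by apply: round_err_dilate y_in; lra.
  apply/grid_inP; rewrite -(subKr y (gridpt _)).
  have -> : (3/16 : R) = 1/8 + 1/16 by lra.
  by apply: (dilateB Kconv Ksym _ _ y_in y_err); lra.
have G_inj : {in grid_in (9/4) &, injective G}.
  move=> k k' k_in k'_in [eq_round eq_mod]; apply/ffunP => i; apply/val_inj.
  have scaled q : (18^-1 *: gridpt q) ord0 i / eps = ((q i)%:R - B%:R) / 18.
    by rewrite !mxE; field; apply: lt0r_neq0.
  apply: (@eq_floor_divn R 18 _ _ B%:R) => //.
    have := congr1 (fun q => gridpt q ord0 i) eq_round.
    rewrite /= !(gridpt_round eps_gt0) ?shrink_cube // !scaled.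
    by move/(mulfI (lt0r_neq0 eps_gt0))/intr_inj.
  have := congr1 (fun g : {ffun 'I_d -> 'I_18} => val (g i)) eq_mod.
  by rewrite /= !ffunE !inordK // ltn_pmod.
have := subset_leq_card G_sub.
by rewrite card_in_imset // cardsX cardsT card_ffun !card_ord mulnC.
Qed.

Lemma grid_in_gt0 : (0 < #|grid_in (3/16)|)%N.
Proof.
apply/card_gt0P; exists (grid_round 0); apply/grid_inP.
rewrite (gridpt_roundK eps_gt0); first exact: dilate0.
  by move=> i; rewrite mxE normr0 mulr_ge0 // ltW.
by move=> i; exists 0; rewrite mxE mulr0.
Qed.

Lemma grid_separated_card_le n (f : 'I_n -> 'rV[R]_d) : separated K f ->
  (n <= 18 ^ d)%N.
Proof.
move=> f_sep; rewrite -(leq_pmul2r grid_in_gt0).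
exact: leq_trans (card_separated_mul f_sep) card_grid_in_le.
Qed.

End Packing.

Section Covering.
Variables (R : realType) (d : nat) (K : set 'rV[R]_d) (r b : R).
Hypothesis Kconv : forall x y (t : R), K x -> K y -> 0 <= t <= 1 ->
  K (t *: x + (1 - t) *: y).
Hypothesis Ksym : centrally_symmetric K.
Hypothesis r_gt0 : 0 < r.
Hypothesis cube_sub_K : cube r `<=` K.
Hypothesis K_sub_cube : K `<=` cube b.

Lemma separated_card_le n (f : 'I_n -> 'rV[R]_d) : separated K f ->
  (n <= 18 ^ d)%N.
Proof.
have eps_gt0 : 0 < r / 16 by have := r_gt0; lra.
pose B := Num.Def.archi_bound `|3 * b / (r / 16)|.
have B_large : 3 * b <= B%:R * (r / 16).
  rewrite -ler_pdivrMr //; apply: le_trans (ler_norm _) (ltW _).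
  exact: archi_boundP.
apply: (grid_separated_card_le Kconv Ksym cube_sub_K K_sub_cube eps_gt0 _ B_large).
by have := r_gt0; lra.
Qed.

Lemma dilate_covering : exists M, (M <= 18 ^ d)%N /\ exists z : 'I_M -> 'rV[R]_d,
  forall y, dilate K 2 y -> exists j, dilate K (1/2) (y - z j).
Proof.
pose P n := `[< exists f : 'I_n -> 'rV[R]_d, separated K f >].
have P0 : exists n, P n by exists 0%N; apply/asboolP; exists (fun _ => 0); split; case.
have P_le n : P n -> (n <= 18 ^ d)%N by move=> /asboolP[f /separated_card_le].
have [n /asboolP[f f_sep] n_max] := ex_maxnP P0 P_le.
exists n; split; first exact: separated_card_le f_sep.
exists f => y y_in; apply: contrapT => y_far.
have : P n.+1.
  apply/asboolP; apply: separated_extend Ksym f_sep y_in _ => j y_near.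
  by apply: y_far; exists j.
by move/n_max; rewrite ltnn.
Qed.

End Covering.

Section Polar.
Variables (R : realType) (d : nat).
Implicit Types (w x y : 'rV[R]_d) (X : set 'rV[R]_d) (a t : R).

Lemma dotvDl w x y : dotv (x + y) w = dotv x w + dotv y w.
Proof. by rewrite /dotv -big_split; apply: eq_bigr => i _; rewrite mxE mulrDl. Qed.

Lemma dotvDr w x y : dotv w (x + y) = dotv w x + dotv w y.
Proof. by rewrite /dotv -big_split; apply: eq_bigr => i _; rewrite mxE mulrDr. Qed.

Lemma dotvZl w a x : dotv (a *: x) w = a * dotv x w.
Proof. by rewrite /dotv mulr_sumr; apply: eq_bigr => i _; rewrite mxE mulrA. Qed.

Lemma dotvZr w a x : dotv w (a *: x) = a * dotv w x.
Proof. by rewrite /dotv mulr_sumr; apply: eq_bigr => i _; rewrite mxE mulrCA. Qed.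

Lemma dotvNl w x : dotv (- x) w = - dotv x w.
Proof. by rewrite /dotv -sumrN; apply: eq_bigr => i _; rewrite mxE mulNr. Qed.

Lemma dotvNr w x : dotv w (- x) = - dotv w x.
Proof. by rewrite /dotv -sumrN; apply: eq_bigr => i _; rewrite mxE mulrN. Qed.

Lemma dotv_delta i y : dotv (delta_mx ord0 i) y = y ord0 i.
Proof.
rewrite /dotv (bigD1 i) //= big1 ?addr0; first by rewrite mxE !eqxx mul1r.
by move=> j ji; rewrite mxE eqxx /= (negbTE ji) mul0r.
Qed.

Lemma dotv_le_cube w y a t : cube a w -> cube t y -> dotv w y <= d%:R * (a * t).
Proof.
move=> wa yt; apply: le_trans (ler_norm _) _; apply: le_trans (ler_norm_sum _ _ _) _.
have -> : d%:R * (a * t) = \sum_(i < d) (a * t) by rewrite sumr_const card_ord mulr_natl.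
apply: ler_sum => i _.
by rewrite normrM ler_pM.
Qed.

Lemma polar_convex X x y t : polar X x -> polar X y -> 0 <= t <= 1 ->
  polar X (t *: x + (1 - t) *: y).
Proof.
move=> Xx Xy /andP[t0 t1] w Xw; rewrite dotvDr !dotvZr.
have t1' : 0 <= 1 - t by lra.
have := ler_wpM2l t0 (Xx w Xw); have := ler_wpM2l t1' (Xy w Xw); lra.
Qed.

Lemma polar_sym X : centrally_symmetric X -> centrally_symmetric (polar X).
Proof. by move=> Xsym x Xx w Xw; rewrite dotvNr -dotvNl; apply: Xx (Xsym _ Xw). Qed.

Lemma cube_sub_polar X a : 0 <= a -> X `<=` cube a ->
  cube (d%:R * a + 1)^-1 `<=` polar X.
Proof.
move=> a0 Xa x xc w /Xa wa; apply: le_trans (dotv_le_cube wa xc) _.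
have da0 : 0 <= d%:R * a by rewrite mulr_ge0.
by rewrite mulrA ler_pdivrMr ?mul1r; lra.
Qed.

Lemma polar_sub_cube X a : 0 < a -> cube a `<=` X -> polar X `<=` cube a^-1.
Proof.
move=> a0 aX x Xx i.
have e_in (s : R) : `|s| <= a -> X (s *: delta_mx ord0 i).
  move=> sa; apply: aX => j; rewrite !mxE eqxx /=.
  by case: eqP => _; rewrite ?mulr1 ?mulr0 ?normr0 // ltW.
have a_le : `|a| <= a by rewrite gtr0_norm.
have na_le : `|- a| <= a by rewrite normrN gtr0_norm.
have := Xx _ (e_in _ na_le); have := Xx _ (e_in _ a_le).
rewrite !dotvZl !dotv_delta => xu xl; rewrite ler_norml; apply/andP; split.
  by rewrite -(ler_pM2l a0) mulrN mulfV ?gt_eqF // lerNl -mulNr.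
by rewrite -(ler_pM2l a0) mulfV ?gt_eqF.
Qed.

End Polar.

Lemma coord_le_mx_norm (R : realType) d (x : 'rV[R]_d) i : `|x ord0 i| <= `|x|.
Proof. by rewrite [X in _ <= X]mx_normrE; apply: (le_bigmax _ _ (ord0, i)). Qed.

Lemma compact_sub_cube (R : realType) d (C : set 'rV[R]_d) :
  compact C -> exists2 a : R, 0 <= a & C `<=` cube a.
Proof.
move=> /compact_bounded [M [_ HM]].
exists (`|M| + 1); first by rewrite addr_ge0.
move=> x Cx i; apply: le_trans (coord_le_mx_norm x i) (HM _ _ _ Cx).
by apply: le_lt_trans (ler_norm M) _; rewrite ltrDl.
Qed.

Lemma convex_setP (R : realType) d (A : set 'rV[R]_d) :
  convex_set (A : set (convex_lmodType 'rV[R]_d)) ->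
  forall x y (t : R), A x -> A y -> 0 <= t <= 1 -> A (t *: x + (1 - t) *: y).
Proof.
move=> Aconv x y t Ax Ay t01.
have t_itv : Itv.spec (@Itv.num_sem R) (Itv.Real `[0%Z, 1%Z]) t.
  by rewrite /Itv.spec /Itv.num_sem /= num_real in_itv /= mulr0z mulr1z.
by have := Aconv x y (Itv.mk t_itv); rewrite !inE => /(_ Ax Ay).
Qed.

Lemma convex_body_cube (R : realType) d (D : set 'rV[R]_d) : convex_body D ->
  centrally_symmetric D -> exists2 a : R, 0 < a & cube a `<=` D.
Proof.
move=> [_ /convex_setP Dconv [x0 /nbhs_ballP [e e0 x0_ball]]] Dsym.
exists (e / 2) => [|y ye]; first exact: divr_gt0.
have near_x0 z : cube (e / 2) z -> D (x0 + z).
  move=> ze; apply: x0_ball; split=> // i j; rewrite (ord1 i).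
  rewrite -ball_normE /ball_ /= !mxE opprD addrA subrr add0r normrN.
  by apply: le_lt_trans (ze j) _; rewrite ltr_pdivrMr // ltr_pMr // ltr1n.
have ye' : cube (e / 2) (- y) by move=> i; rewrite mxE normrN.
have := Dconv _ _ (1/2) (near_x0 _ ye) (Dsym _ (near_x0 _ ye')).
rewrite (_ : 1/2 *: (x0 + y) + (1 - 1/2) *: - (x0 + - y) = y); first by apply; lra.
by apply/rowP => k; rewrite !mxE; lra.
Qed.

Lemma covered_by_refine (R : realType) d (E E' U : set 'rV[R]_d) (a : R) m M :
  Defs.covered_by E U a m ->
  (forall x, exists z : 'I_M -> 'rV[R]_d, U `&` [set x + a *: e | e in E] `<=`
     \bigcup_(j in [set: 'I_M]) [set z j + a *: e | e in E']) ->
  Defs.covered_by E' U a (m * M).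
Proof.
move=> [x Ux] /choice[z zP].
exists (fun k => mxvec (\matrix_(i < m, j < M) z (x i) j) 0 k) => y Uy.
have [i _ yi] := Ux y Uy; have [j _ yj] := zP (x i) y (conj Uy yi).
by exists (mxvec_index i j) => //; rewrite mxvecE mxE.
Qed.

Lemma covnum_le_mul (R : realType) d (E E' U : set 'rV[R]_d) (a : R) (c : nat) :
  (0 < c)%N ->
  (forall m, Defs.covered_by E U a m ->
     exists2 m', Defs.covered_by E' U a m' & (m' <= c * m)%N) ->
  (covnum E' U a <= c%:R%:E * covnum E U a)%E.
Proof.
move=> c_gt0 cover_refine.
have [[m0 Em0]|no_cover] := pselect (exists m, Defs.covered_by E U a m); last first.
  have -> : covnum E U a = +oo%E.
    rewrite /covnum (_ : Defs.covered_by E U a = set0) ?image_set0 ?ereal_inf0 //.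
    by apply/seteqP; split=> // m Em; apply: no_cover; exists m.
  by rewrite gt0_muley ?leey // lte_fin ltr0n.
pose P m := `[< Defs.covered_by E U a m >].
have [m /asboolP Em m_min] := @ex_minnP P (ex_intro _ m0 (asboolT Em0)).
have -> : covnum E U a = m%:R%:E.
  apply/le_anti/andP; split.
    by apply: ge_ereal_inf; exists m%:R%:E => //; exists m.
  apply/ereal_infP => _ [m' Em' <-]; rewrite lee_fin ler_nat.
  by apply: m_min; apply/asboolP.
have [m' E'm' le_m'] := cover_refine m Em.
apply: (@le_trans _ _ (m'%:R%:E)).
  by apply: ge_ereal_inf; exists m'%:R%:E => //; exists m'.
by rewrite -EFinM lee_fin -natrM ler_nat.
Qed.

Definition polar_meet (R : realType) d (C D : set 'rV[R]_d) (alpha : R) :=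
  dilate (polar C) alpha `&` polar D.

Section PolarMeet.
Variables (R : realType) (d : nat) (C D : set 'rV[R]_d) (alpha : R).
Hypothesis alpha_gt0 : 0 < alpha.
Local Notation K := (polar_meet C D alpha).

Lemma polar_meet_convex x y (t : R) : K x -> K y -> 0 <= t <= 1 ->
  K (t *: x + (1 - t) *: y).
Proof.
move=> [Cx Dx] [Cy Dy] t01; split; last exact: polar_convex.
by rewrite /dilate scalerDr !scalerA ![alpha^-1 * _]mulrC -!scalerA; apply: polar_convex.
Qed.

Lemma polar_meet_sym : centrally_symmetric C -> centrally_symmetric D ->
  centrally_symmetric K.
Proof.
move=> Csym Dsym x [Cx Dx].
by split; [apply: dilateN (polar_sym Csym) _ | apply: polar_sym Dsym _ _].
Qed.

Lemma cube_sub_polar_meet : compact C -> compact D ->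
  exists2 r : R, 0 < r & cube r `<=` K.
Proof.
move=> /compact_sub_cube[a a0 Ca] /compact_sub_cube[b b0 Db].
have C_cube := cube_sub_dilate alpha_gt0 (cube_sub_polar a0 Ca).
have D_cube := cube_sub_polar b0 Db.
exists (Num.min (alpha * (d%:R * a + 1)^-1) (d%:R * b + 1)^-1) => [|x xr].
  by rewrite lt_min mulr_gt0 ?invr_gt0 ?ltr_wpDl ?mulr_ge0.
split; [apply: C_cube | apply: D_cube]; apply: cube_le xr; by rewrite ge_min lexx ?orbT.
Qed.

Lemma polar_meet_sub_cube : convex_body D -> centrally_symmetric D ->
  exists b, K `<=` cube b.
Proof.
move=> Dbody Dsym; have [a a0 aD] := convex_body_cube Dbody Dsym.
by exists a^-1 => x [_ Dx]; apply: polar_sub_cube a0 aD _ Dx.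
Qed.

Lemma half_polar_meet_sub :
  dilate K (1/2) `<=` dilate (polar (mink_add C D alpha)) alpha.
Proof.
move=> v [vC vD] _ [c Cc [e De <-]].
have := vC c Cc; have := vD e De.
rewrite /dilate div1r invrK dotvDl dotvZl !dotvZr mulVKf ?gt_eqF //.
by rewrite mulrCA; lra.
Qed.

Lemma cell_sub_dilate (U : set 'rV[R]_d) x y p :
  U `<=` polar D -> centrally_symmetric C -> centrally_symmetric D ->
  let cell := U `&` [set x + alpha *: e | e in polar C] in
  cell y -> cell p -> dilate K 2 (y - p).
Proof.
move=> UD Csym Dsym cell [Uy [e Ce ye]] [Up [e' Ce' pe']]; subst y p; split.
  rewrite /dilate (_ : _ *: _ = 1/2 *: e + (1 - 1/2) *: - e').
    by apply: polar_convex Ce (polar_sym Csym Ce') _; lra.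
  by apply/rowP => k; rewrite !mxE; field; rewrite gt_eqF.
rewrite (_ : _ *: _ = 1/2 *: (x + alpha *: e) + (1 - 1/2) *: - (x + alpha *: e')).
  by apply: polar_convex (UD _ Uy) (polar_sym Dsym (UD _ Up)) _; lra.
by apply/rowP => k; rewrite !mxE; lra.
Qed.

Lemma cell_refine (U : set 'rV[R]_d) M (z : 'I_M -> 'rV[R]_d) :
  U `<=` polar D -> centrally_symmetric C -> centrally_symmetric D ->
  (forall y, dilate K 2 y -> exists j, dilate K (1/2) (y - z j)) ->
  forall x, exists z' : 'I_M -> 'rV[R]_d,
    U `&` [set x + alpha *: e | e in polar C] `<=`
    \bigcup_(j in [set: 'I_M]) [set z' j + alpha *: e | e in polar (mink_add C D alpha)].
Proof.
move=> UD Csym Dsym zP x.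
have [[p p_in]|no_pt] :=
  pselect (exists p, (U `&` [set x + alpha *: e | e in polar C]) p); last first.
  by exists z => y y_in; case: no_pt; exists y.
exists (fun j => p + z j) => y y_in.
have [j j_near] := zP _ (cell_sub_dilate UD Csym Dsym y_in p_in).
exists j => //; exists (alpha^-1 *: (y - p - z j)); first exact: half_polar_meet_sub.
by rewrite scalerA mulfV ?gt_eqF // scale1r addrCA addrK subrK.
Qed.

End PolarMeet.

Theorem lemma4p3 :
  exists c : nat, (1 <= c)%N /\
  forall (R : realType) (d : nat) (C D : set 'rV[R]_d) (alpha : R),
    convex_body C -> centrally_symmetric C ->
    convex_body D -> centrally_symmetric D ->
    0 < alpha ->
    forall U : set 'rV[R]_d, U `<=` polar D ->
    (covnum (polar (mink_add C D alpha)) U alpha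
       <= ((c ^ d)%:R)%:E * covnum (polar C) U alpha)%E.
Proof.
exists 18%N; split=> // R d C D alpha Cbody Csym Dbody Dsym alpha_gt0 U UD.
have [[Ccpt _ _] [Dcpt _ _]] := (Cbody, Dbody).
have [r r_gt0 r_cube] := cube_sub_polar_meet alpha_gt0 Ccpt Dcpt.
have [b b_cube] := @polar_meet_sub_cube R d C D alpha Dbody Dsym.
have [M [M_le [z zP]]] := dilate_covering (@polar_meet_convex R d C D alpha)
  (polar_meet_sym Csym Dsym) r_gt0 r_cube b_cube.
apply: covnum_le_mul => [|m Um]; first by rewrite expn_gt0.
exists (m * M)%N.
  exact: covered_by_refine Um (cell_refine alpha_gt0 UD Csym Dsym zP).
by rewrite mulnC leq_mul2r M_le orbT.
Qed.
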